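(* The unitary $U_4=(T_{AB}\otimes I_2)(I_2\otimes T_{BC})$ on $\mathbb{C}^2\otimes\mathbb{C}^2\otimes\mathbb{C}^2$ has $\mathrm{sr}(U_4)=4$.
   Context: $I_2$ is the $2\times 2$ identity, $\sigma_1=\begin{bmatrix}0&1\\1&0\end{bmatrix}$. $T=|0\rangle\langle0|\otimes I_2+|1\rangle\langle1|\otimes\sigma_1$ is the CNOT gate; $T_{AB}$ denotes $T$ with control qubit $A$ and target $B$, $T_{BC}$ with control $B$ and target $C$. For a matrix $U$ on $\mathbb{C}^2\otimes\mathbb{C}^2\otimes\mathbb{C}^2$ (systems $A,B,C$), its Schmidt rank $\mathrm{sr}(U)$ is the least integer $r$ such that $U=\sum_{j=1}^r A_j\otimes B_j\otimes C_j$ with $A_j,B_j,C_j$ complex $2\times 2$ matrices (i.e. the tensor rank of $U$). *)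

(* Complex scalars: any numClosedFieldType C (e.g. algC, or R[i]). *)
From HB Require Import structures.
From mathcomp Require Import all_boot all_order all_algebra.
From mathcomp Require Import mxtens.
Set Implicit Arguments. Unset Strict Implicit. Unset Printing Implicit Defensive.
Import Order.TTheory GRing.Theory Num.Theory.
Local Open Scope ring_scope.

Section Defs.
Variable C : numClosedFieldType.

Definition I2 : 'M[C]_2 := 1%:M.

Definition sigma1 : 'M[C]_2 := \matrix_(i < 2, j < 2) (i != j)%:R.

Definition ket0bra0 : 'M[C]_2 := delta_mx 0 0.
Definition ket1bra1 : 'M[C]_2 := delta_mx 1 1.

Definition CNOT : 'M[C]_(2 * 2) := ket0bra0 *t I2 + ket1bra1 *t sigma1.

Definition T_AB_I : 'M[C]_(2 * 2 * 2) := CNOT *t I2.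
Definition I_T_BC : 'M[C]_(2 * 2 * 2) := castmx (mulnA 2 2 2, mulnA 2 2 2) (I2 *t CNOT).

Definition U4 : 'M[C]_(2 * 2 * 2) := T_AB_I *m I_T_BC.

Definition has_tensor_decomp (r : nat) (U : 'M[C]_(2 * 2 * 2)) : Prop :=
  exists (A B D : 'I_r -> 'M[C]_2), U = \sum_(j < r) (A j *t B j) *t D j.

Definition schmidt_rank_is (U : 'M[C]_(2 * 2 * 2)) (r : nat) : Prop :=
  has_tensor_decomp r U /\ (forall r', has_tensor_decomp r' U -> (r <= r')%N).

End Defs.

From HB Require Import structures.
From mathcomp Require Import all_boot all_order all_algebra.
From mathcomp Require Import mxtens.
Set Implicit Arguments. Unset Strict Implicit. Unset Printing Implicit Defensive.
Import Order.TTheory GRing.Theory Num.Theory.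
Local Open Scope ring_scope.

(* Upper bound: multiplying out the two CNOT factors with the mixed-product
   rule for Kronecker products writes U4 as an explicit sum of four product
   operators  P0(x)P0(x)I + P0(x)P1(x)X + P1(x)XP0(x)I + P1(x)XP1(x)X.

   Lower bound (a flattening argument): fix row/column indices a, a' of the
   first factor and c, c' of the third one; the resulting n x n "middle
   slice" of  sum_j A_j (x) B_j (x) D_j  is  sum_j A_j[a,a'] D_j[c,c'] B_j,
   hence lies in the span of B_1, ..., B_r.  If the slices of U contain every
   matrix unit, this span is the whole matrix space, so r >= n^2.  For U4
   the four matrix units of 'M_2 all occur as slices, giving r >= 4. *)

Section KroneckerAlgebra.
Variable R : comPzRingType.

Lemma tensmxDl m n p q (A B : 'M[R]_(m, n)) (M : 'M[R]_(p, q)) :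
  (A + B) *t M = A *t M + B *t M.
Proof. by apply/matrixP=> i j; rewrite !mxE mulrDl. Qed.

Lemma tensmxDr m n p q (M : 'M[R]_(m, n)) (A B : 'M[R]_(p, q)) :
  M *t (A + B) = M *t A + M *t B.
Proof. by apply/matrixP=> i j; rewrite !mxE mulrDr. Qed.

Lemma castmxD m n m' n' (e : (m = m') * (n = n')) (A B : 'M[R]_(m, n)) :
  castmx e (A + B) = castmx e A + castmx e B.
Proof. by apply/matrixP=> i j; rewrite !(castmxE, mxE). Qed.

Lemma tensmxA m n p q r s (A : 'M[R]_(m, n)) (B : 'M[R]_(p, q)) (D : 'M[R]_(r, s)) :
  castmx (mulnA m p r, mulnA n q s) (A *t (B *t D)) = (A *t B) *t D.
Proof.
apply/matrixP=> i j.
case: (mxtens_indexP i)=> ab c; case: (mxtens_indexP ab)=> a b.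
case: (mxtens_indexP j)=> ab' c'; case: (mxtens_indexP ab')=> a' b'.
rewrite castmxE !tensmxE.
have reassoc k l t (x : 'I_k) (y : 'I_l) (z : 'I_t) :
    cast_ord (esym (mulnA k l t)) (mxtens_index (mxtens_index (x, y), z))
    = mxtens_index (x, mxtens_index (y, z)).
  by apply: val_inj=> /=; rewrite mulnDl -mulnA addnA.
by rewrite !reassoc !tensmxE mulrA.
Qed.

End KroneckerAlgebra.

Section MiddleSlices.
Variables (K : fieldType) (m n p : nat).

Definition idx3 (a : 'I_m) (b : 'I_n) (c : 'I_p) : 'I_(m * n * p) :=
  mxtens_index (mxtens_index (a, b), c).

Definition mslice (a a' : 'I_m) (c c' : 'I_p) (M : 'M[K]_(m * n * p)) : 'M[K]_n :=
  \matrix_(b, b') M (idx3 a b c) (idx3 a' b' c').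

Lemma mslice_add a a' c c' (M N : 'M[K]_(m * n * p)) :
  mslice a a' c c' (M + N) = mslice a a' c c' M + mslice a a' c c' N.
Proof. by apply/matrixP=> i j; rewrite !mxE. Qed.

Lemma mslice_sum a a' c c' r (F : 'I_r -> 'M[K]_(m * n * p)) :
  mslice a a' c c' (\sum_(j < r) F j) = \sum_(j < r) mslice a a' c c' (F j).
Proof.
apply/matrixP=> i j; rewrite !mxE !summxE.
by apply: eq_bigr=> k _; rewrite mxE.
Qed.

Lemma mslice_tens a a' c c' (A : 'M[K]_m) (B : 'M[K]_n) (D : 'M[K]_p) :
  mslice a a' c c' ((A *t B) *t D) = (A a a' * D c c') *: B.
Proof. by apply/matrixP=> i j; rewrite [LHS]mxE /idx3 !tensmxE !mxE mulrAC. Qed.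

Lemma tensor_rank_ge_slices (U : 'M[K]_(m * n * p)) r
    (A : 'I_r -> 'M[K]_m) (B : 'I_r -> 'M[K]_n) (D : 'I_r -> 'M[K]_p) :
  (forall i j, exists a a' c c', delta_mx i j = mslice a a' c c' U) ->
  U = \sum_(j < r) (A j *t B j) *t D j -> (n * n <= r)%N.
Proof.
move=> units_are_slices decU.
pose V := <<map B (enum 'I_r)>>%VS.
have slice_in_V a a' c c' : mslice a a' c c' U \in V.
  rewrite decU mslice_sum; apply: memv_suml => j _.
  by rewrite mslice_tens memvZ // memv_span // map_f // mem_enum.
have V_full : (fullv <= V)%VS.
  apply/subvP => M _; rewrite [M]matrix_sum_delta.
  apply: memv_suml => i _; apply: memv_suml => j _; apply: memvZ.
  by have [a [a' [c [c' ->]]]] := units_are_slices i j.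
have := dimvS V_full; rewrite dimvf dim_matrix => /leq_trans; apply.
by apply: (leq_trans (dim_span _)); rewrite size_map size_enum_ord.
Qed.

End MiddleSlices.

Section U4Computations.
Variable C : numClosedFieldType.
Local Notation P0 := (ket0bra0 C).
Local Notation P1 := (ket1bra1 C).
Local Notation X := (sigma1 C).
Local Notation I := (I2 C).

Lemma U4E : U4 C = (P0 *t P0) *t I + (P0 *t P1) *t X
   + (P1 *t (X *m P0)) *t I + (P1 *t (X *m P1)) *t X.
Proof.
rewrite /U4 /T_AB_I /I_T_BC /CNOT tensmxDr castmxD !tensmxA tensmxDl.
rewrite !mulmxDl !mulmxDr !tensmx_mul.
by rewrite /I2 !mulmx1 !mul1mx !addrA.
Qed.

Lemma U4_matrix_units_are_slices (i j : 'I_2) :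
  exists a a' c c', delta_mx i j = mslice a a' c c' (U4 C).
Proof.
have sliceE a a' c c' : mslice a a' c c' (U4 C) =
    (P0 a a' * I c c') *: P0 + (P0 a a' * X c c') *: P1
    + (P1 a a' * I c c') *: (X *m P0) + (P1 a a' * X c c') *: (X *m P1).
  by rewrite U4E !mslice_add !mslice_tens.
case: i => [[|[|//]] ?]; case: j => [[|[|//]] ?];
  [exists 0, 0, 0, 0 | exists 1, 1, 0, 1 | exists 1, 1, 0, 0 | exists 0, 0, 0, 1];
  rewrite sliceE; apply/matrixP=> i j;
  rewrite !mxE !big_ord_recr !big_ord0 /= !mxE /=;
  by case: i => [[|[|//]] ?]; case: j => [[|[|//]] ?] /=;
     rewrite ?(mul0r, mulr0, mul1r, mulr1, add0r, addr0).
Qed.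

End U4Computations.

Theorem mainTheorem14 (C : numClosedFieldType) : schmidt_rank_is (U4 C) 4.
Proof.
split.
  exists (fun j : 'I_4 => [:: ket0bra0 C; ket0bra0 C; ket1bra1 C; ket1bra1 C]`_j).
  exists (fun j : 'I_4 =>
    [:: ket0bra0 C; ket1bra1 C; sigma1 C *m ket0bra0 C; sigma1 C *m ket1bra1 C]`_j).
  exists (fun j : 'I_4 => [:: I2 C; sigma1 C; I2 C; sigma1 C]`_j).
  by rewrite U4E !big_ord_recr big_ord0 /= add0r.
move=> r [A [B [D decU]]].
exact: tensor_rank_ge_slices (@U4_matrix_units_are_slices C) decU.
Qed.
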